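(* Let $C$ be a finite non-degenerate projective configuration with lines $l_0,l_1,\dots,l_n$, let $\mathcal{P}_0$ be the set of its points not incident to $l_0$, and let $\mathcal{A}=\{(i,p)\in\{1,\dots,n\}\times\mathcal{P}_0 : p \text{ is incident to } l_i\}$. Let $L=\bigoplus_{k\ge1}L_k$ be the free Lie algebra over $\mathbb{Z}$ on $x_1,\dots,x_n$, graded by degree, $H=L_1$, $S_p=\sum_{j:\,p\prec l_j}x_j$ for $p\in\mathcal{P}_0$, $R_2\subset L_2$ the subgroup spanned by the elements $\bar r(i,p)=[x_i,S_p]$ for $(i,p)\in\mathcal{A}$ with $i\neq\min\{j:l_j\succ p\}$ (a $\mathbb{Z}$-basis of $R_2$), $P_2=L_2/R_2$, $R_3=[H,R_2]$, $P_3=L_3/R_3$. The Lie bracket induces a well-defined bilinear map $H\times P_2\to P_3$, $(x,y+R_2)\mapsto[x,y]+R_3$. For $f\in\mathrm{Hom}(H,P_2)$ let $\bar\delta f\in\mathrm{Hom}(R_2,P_3)$ be the restriction to $R_2$ of the homomorphism $L_2\to P_3$ given by $[x,y]\mapsto[x,f(y)]-[y,f(x)]$ for $x,y\in H$. Let $A=H^{\mathcal{A}}$ and define $\tilde\tau:A\to\mathrm{Hom}(R_2,P_3)$ on the basis of $R_2$ by $$\tilde\tau a(\bar r(i,p))=[[x_i,a(i,p)],S_p]+\Big[x_i,\sum_{j:\,p\prec l_j}[x_j,a(j,p)]\Big]+R_3 .$$ Let $B\subseteq A$ be the subgroup of maps $a$ that do not depend on $p$, i.e. $a(i,p)=a(i,q)$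 whenever $(i,p),(i,q)\in\mathcal{A}$. Then $\tilde\tau(B)\subseteq\bar\delta\,\mathrm{Hom}(H,P_2)$.
   Context: A projective configuration is a triple $(\mathcal{L},\mathcal{P},\succ)$ of a set of lines, a set of points and an incidence relation between them (written $l\succ p$ or $p\prec l$) such that any two distinct lines are incident to a unique common point and every point is incident to at least two lines; it is non-degenerate if it has more than one point. $L_2$ is identified with $\Lambda^2H$ via $x\wedge y\mapsto[x,y]$. *)

From HB Require Import structures.
From mathcomp Require Import all_boot all_order all_algebra.
Set Implicit Arguments. Unset Strict Implicit. Unset Printing Implicit Defensive.
Import Order.TTheory GRing.Theory Num.Theory.
Local Open Scope ring_scope.

(* The free Lie ring L on x_0..x_(n-1) (paper: x_1..x_n) is realised inside the
   free associative ring (tensor ring) over Z on the same generators; the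
   homogeneous components T^1, T^2, T^3 are integer-valued functions on
   'I_n, 'I_n^2, 'I_n^3.  L_1 = H = T^1, L_k = Z-span of iterated brackets. *)
Notation T1 n := {ffun 'I_n -> int}.
Notation T2 n := {ffun 'I_n * 'I_n -> int}.
Notation T3 n := {ffun 'I_n * 'I_n * 'I_n -> int}.

Section LieDefs.
Variable n : nat.

Definition gen (j : 'I_n) : T1 n := [ffun k => (k == j)%:Z].

Definition tens11 (x y : T1 n) : T2 n := [ffun ij => x ij.1 * y ij.2].
Definition tens12 (x : T1 n) (u : T2 n) : T3 n :=
  [ffun ijk => x ijk.1.1 * u (ijk.1.2, ijk.2)].
Definition tens21 (u : T2 n) (x : T1 n) : T3 n :=
  [ffun ijk => u (ijk.1.1, ijk.1.2) * x ijk.2].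

Definition br11 (x y : T1 n) : T2 n := tens11 x y - tens11 y x.
Definition br12 (x : T1 n) (u : T2 n) : T3 n := tens12 x u - tens21 u x.
Definition br21 (u : T2 n) (x : T1 n) : T3 n := tens21 u x - tens12 x u.

Definition inL2 (u : T2 n) : Prop :=
  exists c : 'I_n -> 'I_n -> int,
    u = \sum_(i < n) \sum_(j < n) br11 (gen i) (gen j) *~ c i j.

(* The homomorphism L_2 -> L_3 (lifting L_2 -> P_3) induced by a lift
   g : x_j |-> g j of f in Hom(H, P_2):  [x_i, x_j] |-> [x_i, f x_j] - [x_j, f x_i],
   extended linearly using the Z-basis [x_i,x_j] (i<j) of L_2. *)
Definition deltaL (g : 'I_n -> T2 n) (u : T2 n) : T3 n :=
  \sum_(i < n) \sum_(j < n | (i < j)%N)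
     (br12 (gen i) (g j) - br12 (gen j) (g i)) *~ u (i, j).
End LieDefs.

Section ConfigDefs.
(* Projective configuration: lines l_0..l_n indexed by 'I_n.+1, points P,
   incidence inc l p  (l \succ p).  Generator x_j ('I_n) corresponds to the
   line l_(j+1) = lift ord0 j. *)
Variables (n : nat) (P : finType) (inc : 'I_n.+1 -> P -> bool).

Definition is_projective_configuration : Prop :=
  (forall l m : 'I_n.+1, l != m -> exists! p : P, inc l p && inc m p) /\
  (forall p : P, exists l m : 'I_n.+1, l != m /\ inc l p /\ inc m p).

Definition non_degenerate : Prop := (1 < #|P|)%N.

Definition lineof (j : 'I_n) : 'I_n.+1 := lift ord0 j.

Definition inA (i : 'I_n) (p : P) : bool := ~~ inc ord0 p && inc (lineof i) p.

(* min { j : l_j \succ p } (among j >= 1), as a natural index of generators *)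
Definition minline (p : P) : nat :=
  \big[minn/n]_(j < n | inc (lineof j) p) (j : nat).

Definition basisidx (i : 'I_n) (p : P) : bool := inA i p && ((i : nat) != minline p).

Definition Sp (p : P) : T1 n := \sum_(j < n | inc (lineof j) p) gen j.

Definition rbar (i : 'I_n) (p : P) : T2 n := br11 (gen i) (Sp p).

Definition inR2 (u : T2 n) : Prop :=
  exists c : 'I_n -> P -> int,
    u = \sum_(i < n) \sum_(p | basisidx i p) rbar i p *~ c i p.

Definition inR3 (v : T3 n) : Prop :=
  exists s : seq (T1 n * T2 n),
    (forall xr, xr \in s -> inR2 xr.2) /\
    v = \sum_(xr <- s) br12 xr.1 xr.2.

(* a lift to L_3 of \tilde\tau a (\bar r(i,p)) *)
Definition tau (a : 'I_n -> P -> T1 n) (i : 'I_n) (p : P) : T3 n :=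
  br21 (br11 (gen i) (a i p)) (Sp p) +
  br12 (gen i) (\sum_(j < n | inc (lineof j) p) br11 (gen j) (a j p)).

Definition inB (a : 'I_n -> P -> T1 n) : Prop :=
  forall (i : 'I_n) (p q : P), inA i p -> inA i q -> a i p = a i q.
End ConfigDefs.

(* For [a] in [B] write [a (i, p) = b_i] and take [f x_j = [x_j, b_j]].
   Expanding both sides bilinearly,
     [\bar\delta f (\bar r (i,p)) = \sum_(j, p \prec l_j) ([x_i,[x_j,b_j]] - [x_j,[x_i,b_i]])]
   and, since [[[x_i,b_i], S_p] = - [S_p,[x_i,b_i]]], this is literally the
   chosen lift of [\tilde\tau a (\bar r (i,p))]: the difference is [0 \in R_3],
   without even using the Jacobi identity. *)
From mathcomp Require Import all_boot all_order all_algebra.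
From mathcomp Require Import ring.
Set Implicit Arguments. Unset Strict Implicit.
Import GRing.Theory.
Local Open Scope ring_scope.

Section Brackets.
Variable n : nat.
Implicit Types (x y z : T1 n) (u v : T2 n) (g : 'I_n -> T2 n).

Lemma br11rD x y z : br11 x (y + z) = br11 x y + br11 x z.
Proof. by apply/ffunP => k; rewrite !ffunE; ring. Qed.

Lemma br11r0 x : br11 x 0 = 0.
Proof. by apply/ffunP => k; rewrite !ffunE; ring. Qed.

Lemma br11rMz x y (c : int) : br11 x (y *~ c) = br11 x y *~ c.
Proof. by apply/ffunP => k; rewrite !(ffunMzE, ffunE) mulrzAr mulrzAl -mulrzBl. Qed.

Lemma br12rD x u v : br12 x (u + v) = br12 x u + br12 x v.
Proof. by apply/ffunP => k; rewrite !ffunE; ring. Qed.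

Lemma br12r0 x : br12 x 0 = 0.
Proof. by apply/ffunP => k; rewrite !ffunE; ring. Qed.

Lemma br12lD x y u : br12 (x + y) u = br12 x u + br12 y u.
Proof. by apply/ffunP => k; rewrite !ffunE; ring. Qed.

Lemma br12l0 u : br12 0 u = 0.
Proof. by apply/ffunP => k; rewrite !ffunE; ring. Qed.

Lemma br21_opp u x : br21 u x = - br12 x u.
Proof. by rewrite /br21 /br12 opprB. Qed.

Lemma br11_sumr I (r : seq I) (Q : pred I) x (F : I -> T1 n) :
  br11 x (\sum_(j <- r | Q j) F j) = \sum_(j <- r | Q j) br11 x (F j).
Proof. exact: (big_morph _ (br11rD x) (br11r0 x)). Qed.

Lemma br12_sumr I (r : seq I) (Q : pred I) x (F : I -> T2 n) :
  br12 x (\sum_(j <- r | Q j) F j) = \sum_(j <- r | Q j) br12 x (F j).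
Proof. exact: (big_morph _ (br12rD x) (br12r0 x)). Qed.

Lemma br12_suml I (r : seq I) (Q : pred I) (F : I -> T1 n) u :
  br12 (\sum_(j <- r | Q j) F j) u = \sum_(j <- r | Q j) br12 (F j) u.
Proof. exact: (big_morph (fun x => br12 x u) (fun x y => br12lD x y u) (br12l0 u)). Qed.

Lemma T1_gen_decomp x : x = \sum_(k < n) gen k *~ x k.
Proof.
apply/ffunP => k; rewrite sum_ffunE (bigD1 k) //= big1 ?addr0.
  by rewrite ffunMzE ffunE eqxx intz.
by move=> l; rewrite eq_sym => /negbTE nlk; rewrite ffunMzE ffunE nlk mul0rz.
Qed.

Lemma inL2_br11_gen (j : 'I_n) x : inL2 (br11 (gen j) x).
Proof.
exists (fun i k => if i == j then x k else 0).
rewrite (bigD1 j) //= [X in _ + X]big1 ?addr0 => [|i /negbTE ->]; last first.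
  by apply: big1 => k _; rewrite mulr0z.
rewrite eqxx {1}(T1_gen_decomp x) br11_sumr.
by apply: eq_bigr => k _; rewrite br11rMz.
Qed.

Lemma deltaLD g u v : deltaL g (u + v) = deltaL g u + deltaL g v.
Proof.
rewrite /deltaL -big_split; apply: eq_bigr => i _; rewrite -big_split.
by apply: eq_bigr => j _; rewrite ffunE mulrzDr.
Qed.

Lemma deltaL0 g : deltaL g 0 = 0.
Proof. by rewrite /deltaL big1 // => i _; rewrite big1 // => j _; rewrite ffunE mulr0z. Qed.

Lemma deltaL_sum I (r : seq I) (Q : pred I) g (F : I -> T2 n) :
  deltaL g (\sum_(j <- r | Q j) F j) = \sum_(j <- r | Q j) deltaL g (F j).
Proof. exact: (big_morph _ (deltaLD g) (deltaL0 g)). Qed.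

Lemma br11_genE (i j a b : 'I_n) :
  br11 (gen i) (gen j) (a, b) = ((a == i) && (b == j))%:Z - ((a == j) && (b == i))%:Z.
Proof. by rewrite !ffunE /=; case: (a == i); case: (b == j); case: (a == j); case: (b == i). Qed.

Lemma sum_lt_pairs_delta (F : 'I_n -> 'I_n -> T3 n) (i j : 'I_n) :
  \sum_(a < n) \sum_(b < n | (a < b)%N) F a b *~ ((a == i) && (b == j))%:Z
  = if (i < j)%N then F i j else 0.
Proof.
rewrite (bigD1 i) //= [X in _ + X]big1 ?addr0 => [|a /negbTE ->]; last first.
  by apply: big1 => b _; rewrite mulr0z.
rewrite eqxx /=; case: ltnP => [ltij|leji].
  rewrite (bigD1 j) //= eqxx [X in _ + X]big1 ?addr0 // => b /andP[_ /negbTE ->].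
  by rewrite mulr0z.
apply: big1 => b ltib; case: eqP => [eqbj|_]; last by rewrite mulr0z.
by rewrite eqbj ltnNge leji in ltib.
Qed.

Lemma deltaL_br11_gen g (i j : 'I_n) :
  deltaL g (br11 (gen i) (gen j)) = br12 (gen i) (g j) - br12 (gen j) (g i).
Proof.
pose D a b := br12 (gen a) (g b) - br12 (gen b) (g a).
transitivity (\sum_(a < n) \sum_(b < n | (a < b)%N) D a b *~ ((a == i) && (b == j))%:Z
  - \sum_(a < n) \sum_(b < n | (a < b)%N) D a b *~ ((a == j) && (b == i))%:Z).
  rewrite /deltaL -sumrB; apply: eq_bigr => a _; rewrite -sumrB.
  by apply: eq_bigr => b _; rewrite br11_genE mulrzBr.
rewrite !sum_lt_pairs_delta; case: (ltngtP i j) => [_|_|/val_inj eqij].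
- by rewrite subr0.
- by rewrite sub0r /D opprB.
- by rewrite eqij !subrr.
Qed.

End Brackets.

Section Configuration.
Variables (n : nat) (P : finType) (inc : 'I_n.+1 -> P -> bool).

Lemma inR3_0 : inR3 inc 0.
Proof. by exists [::]; rewrite big_nil. Qed.

Lemma tau_const_eq_deltaL (b : 'I_n -> T1 n) (i : 'I_n) (p : P) :
  tau inc (fun j _ => b j) i p = deltaL (fun j => br11 (gen j) (b j)) (rbar inc i p).
Proof.
rewrite /tau /rbar /Sp br11_sumr deltaL_sum br21_opp br12_sumr br12_suml.
under [RHS]eq_bigr do rewrite deltaL_br11_gen.
by rewrite [RHS]sumrB addrC.
Qed.

Lemma tau_eq_on (a a' : 'I_n -> P -> T1 n) (i : 'I_n) (p : P) :
  inc (lineof i) p -> (forall j, inc (lineof j) p -> a j p = a' j p) ->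
  tau inc a i p = tau inc a' i p.
Proof.
move=> ip eq_aa'; rewrite /tau eq_aa' //.
by congr (_ + br12 _ _); apply: eq_bigr => j jp; rewrite eq_aa'.
Qed.

Lemma inB_const (a : 'I_n -> P -> T1 n) : inB inc a ->
  exists b : 'I_n -> T1 n, forall j p, inA inc j p -> a j p = b j.
Proof.
move=> aB; exists (fun j => if [pick q | inA inc j q] is Some q then a j q else 0).
move=> j p jp; case: pickP => [q jq|noA]; first exact: aB.
by rewrite noA in jp.
Qed.

End Configuration.

Theorem proposition2p5 (n : nat) (P : finType) (inc : 'I_n.+1 -> P -> bool)
  (hconf : is_projective_configuration inc) (hnd : non_degenerate P)
  (a : 'I_n -> P -> T1 n) (haB : inB inc a) :
  exists g : 'I_n -> T2 n,
    (forall j, inL2 (g j)) /\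
    (forall (i : 'I_n) (p : P), basisidx inc i p ->
       inR3 inc (tau inc a i p - deltaL g (rbar inc i p))).
Proof.
have [b ab] := inB_const haB.
exists (fun j => br11 (gen j) (b j)); split=> [j|i p]; first exact: inL2_br11_gen.
case/andP=> /andP[p0 ip] _.
have -> : tau inc a i p = tau inc (fun j _ => b j) i p.
  by apply: tau_eq_on => // j jp; apply: ab; rewrite /inA p0.
by rewrite tau_const_eq_deltaL subrr; apply: inR3_0.
Qed.
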